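(* Let $\Gamma$ be a $3$-saturated drawing on at least three vertices, with vertex set $V$, edge multiset $E$ and set of crossings $X$. Then \[ |X| \;\le\; 5|V| + 2N(A_3) + N(A_4) + N(B_4) - \frac{1}{6}\sum_{a\ge 6} a\,|\mathcal{C}_a| - |E|. \]
   Context: Drawings are on the sphere: vertices are distinct points, edges (of a graph possibly with parallel edges, no loops) are Jordan arcs; any two edges share finitely many points, each a common endpoint or a proper crossing; no three edges cross at one point; no edge crosses itself; adjacent edges do not cross. A drawing is $3$-plane if every edge is crossed at most three times. A lens is a region bounded by exactly two parts of edges; a drawing is non-homotopic if every lens contains a crossing or vertex in its interior. An edge with $i$ crossings is split into $i+1$ edge-segments; an edge-segment is inner if both endpoints are crossings and outer otherwise. The planarization replaces each crossing by a degree-$4$ vertex; the drawing is connected if its planarization is connected. Cells are the components of the sphere minus all vertices and edges; the boundary $\partial c$ of a cell is a cyclic sequence alternating between edge-segments and vertices/crossings. The size $\|c\|$ of a cell is the number of vertex incidences plus the number of edge-segment incidences along $\partial c$ (crossings not counted); $\mathcal{C}_a$ is the set of cells of size $a$. A drawing is filled if for every cell $c$ and distinct vertices $u\neq v$ on $\partial c$ there is an uncrossed edge $uv$ on $\partial c$. A drawing is $3$-saturated if it is $3$-plane, non-homotopic, connected, filled, and has at least three vertices. Cell types: $A_3$: three crossings and three inner edge-segments, no vertex (size $3$). $A_4$: four crossings and four inner edge-segments (size $4$). $B_4$: boundary $v$, outer segment, crossing, inner segment, crossing, outer segment (size $4$). $N(T)$ is the number of cells of type $T$. *)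

(* A drawing on the sphere is encoded combinatorially by its
   planarization, embedded as a rotation system (combinatorial map) on the sphere. *)
From mathcomp Require Import all_boot all_order all_algebra.
Set Implicit Arguments. Unset Strict Implicit. Unset Printing Implicit Defensive.

(* V : vertices, X : crossings, E : edges (multiset; parallel edges allowed),
   D : darts (half edge-segments) of the planarization.
   alpha : the other half of the same edge-segment,
   sigma : rotation (cyclic order of darts) around a node,
   node  : the node (vertex or crossing) a dart emanates from,
   epath e : the forward darts of the edge-segments of e, in order from
             esrc e to etgt e. *)
Record drawing := Drawing {
  V : finType; X : finType; E : finType; D : finType;
  alpha : D -> D;
  sigma : D -> D;
  node : D -> V + X;
  epath : E -> seq D;
  esrc : E -> V;
  etgt : E -> V }.

Section Defs.
Variable G : drawing.
Local Notation D := (@D G).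
Local Notation alpha := (@alpha G).
Local Notation sigma := (@sigma G).
Local Notation node := (@node G).

Definition is_vnode (n : V G + X G) : bool := if n is inl _ then true else false.
Definition is_xnode (n : V G + X G) : bool := if n is inr _ then true else false.

(* face permutation of the map: cells are the orbits of phi *)
Definition phi (d : D) : D := sigma (alpha d).

(* one step along an edge: from segment d to the next segment through a crossing *)
Definition estep (d d' : D) : bool :=
  is_xnode (node (alpha d)) && (d' == sigma (sigma (alpha d))).

Definition edge_ok (e : E G) : bool :=
  match epath e with
  | [::] => false
  | d0 :: s => [&& node d0 == inl (esrc e),
                   node (alpha (last d0 s)) == inl (etgt e),
                   esrc e != etgt e & path estep d0 s]
  end.

Definition edarts (e : E G) : seq D := epath e ++ map alpha (epath e).

Definition endpoints (e : E G) : seq (V G) := [:: esrc e; etgt e].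

Definition nadj : rel (V G + X G) :=
  fun n n' => [exists d, (node d == n) && (node (alpha d) == n')].

Definition isolated (n : V G + X G) : bool := [forall d, node d != n].

Definition face_root (d : D) : bool := froot phi d == d.
Definition nfaces : nat := #|[pred d | face_root d]|.

Definition drawing_ok : Prop :=
  (forall d, alpha (alpha d) = d /\ alpha d <> d) /\
      injective sigma /\
      (forall d, node (sigma d) = node d) /\
      (forall d d', node d = node d' -> fconnect sigma d d') /\
      (forall x : X G, #|[pred d | node d == inr x]| = 4) /\
      (forall e : E G, edge_ok e) /\
      (forall d, \sum_(e : E G) count_mem d (edarts e) = 1) /\
      (forall d e e', is_xnode (node d) -> d \in edarts e ->
          sigma d \in edarts e' ->
          e != e' /\ [seq v <- endpoints e | v \in endpoints e'] = [::]) /\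
      (* Euler's formula, component by component: genus 0 *)
      #|V G| + #|X G| + nfaces + #|[pred n | isolated n]|
        = #|D| %/ 2 + 2 * n_comp nadj predT.

Definition connected_drawing : Prop := forall n n', connect nadj n n'.

Definition three_plane : Prop := forall e : E G, size (epath e) <= 4.

Definition in_cell (f d : D) : bool := fconnect phi f d.
(* ||c|| = edge-segment incidences + vertex incidences along the boundary walk *)
Definition csize (f : D) : nat :=
  #|[pred d | in_cell f d]| + #|[pred d | in_cell f d && is_vnode (node d)]|.

Definition nvx (f : D) := #|[pred d | in_cell f d && is_vnode (node d)]|.
Definition nxx (f : D) := #|[pred d | in_cell f d && is_xnode (node d)]|.
Definition ninner (f : D) :=
  #|[pred d | in_cell f d && is_xnode (node d) && is_xnode (node (alpha d))]|.
Definition nouter (f : D) :=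
  #|[pred d | in_cell f d && ~~ (is_xnode (node d) && is_xnode (node (alpha d)))]|.

Definition typeA3 (f : D) : bool :=
  [&& csize f == 3, nxx f == 3, ninner f == 3, nvx f == 0 & nouter f == 0].
Definition typeA4 (f : D) : bool :=
  [&& csize f == 4, nxx f == 4, ninner f == 4, nvx f == 0 & nouter f == 0].
Definition typeB4 (f : D) : bool :=
  [&& csize f == 4, nvx f == 1, nxx f == 2, nouter f == 2 & ninner f == 1].

Definition NA3 : nat := #|[pred f | face_root f && typeA3 f]|.
Definition NA4 : nat := #|[pred f | face_root f && typeA4 f]|.
Definition NB4 : nat := #|[pred f | face_root f && typeB4 f]|.
Definition Ccard (a : nat) : nat := #|[pred f | face_root f && (csize f == a)]|.

(* sum_{a >= 6} a |C_a|, grouped by cells *)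
Definition big_cells_sum : nat :=
  \sum_(f : D | face_root f && (6 <= csize f)) csize f.

Definition uncrossed (e : E G) : bool := size (epath e) == 1.

Definition filled : Prop :=
  forall (f : D) (u v : V G), face_root f -> u != v ->
    [exists d, in_cell f d && (node d == inl u)] ->
    [exists d, in_cell f d && (node d == inl v)] ->
    exists (e : E G) (d : D), [/\ uncrossed e, d \in edarts e, in_cell f d &
       ((node d == inl u) && (node (alpha d) == inl v)) ||
       ((node d == inl v) && (node (alpha d) == inl u))].

Definition enodes (e : E G) : seq (V G + X G) :=
  match epath e with
  | [::] => [::]
  | d0 :: _ => node d0 :: [seq node (alpha d) | d <- epath e]
  end.
(* the part of edge e between its i-th and j-th node (0 = esrc e) *)
Definition part_darts (e : E G) (i j : nat) : seq D := take (j - i) (drop i (epath e)).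
Definition part_nodes (e : E G) (i j : nat) : seq (V G + X G) :=
  take (j - i).+1 (drop i (enodes e)).

Definition nonhomotopic : Prop :=
  forall (e e' : E G) (i j i' j' : nat),
    e != e' -> i < j -> i' < j' ->
    j <= size (epath e) -> j' <= size (epath e') ->
    let p := onth (enodes e) i in let q := onth (enodes e) j in
    let p' := onth (enodes e') i' in let q' := onth (enodes e') j' in
    ((p == p') && (q == q')) || ((p == q') && (q == p')) ->
    (forall n, n \in part_nodes e i j -> n \in part_nodes e' i' j' ->
       (Some n == p) || (Some n == q)) ->
    (* the two parts bound a closed curve C; both sides of C (regions of the
       sphere minus C) must contain a vertex or crossing in their interior *)
    let C := part_darts e i j ++ map alpha (part_darts e i j) ++
             part_darts e' i' j' ++ map alpha (part_darts e' i' j') in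
    let Cn := part_nodes e i j ++ part_nodes e' i' j' in
    let r : rel D := fun d d' => (d' == phi d) || ((d' == alpha d) && (d \notin C)) in
    let side_nonempty (d : D) :=
      [exists d', connect r d d' && (node d' \notin Cn)] in
    forall d, d \in part_darts e i j -> side_nonempty d && side_nonempty (alpha d).

Definition three_saturated : Prop :=
  drawing_ok /\ three_plane /\ nonhomotopic /\ connected_drawing /\ filled /\
  3 <= #|V G|.

End Defs.

(* Euler's formula for the planarization, which has |V| + |X| nodes and one
   edge-segment per pair of darts, combined with a discharging count.  The sizes
   of the cells add up to |D| + |Dv|, where Dv are the darts at vertices,
   |D| = |Dv| + 4|X| and |Dv| >= 2|E|.  No cell is bounded by fewer than three
   edge-segments: a loop does not exist, two segments of distinct edges would
   form an empty lens or make adjacent edges cross, and two segments of one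
   edge would be a component with only two vertices.  Hence every cell c has
   5 + [||c|| >= 6] ||c|| / 6 <= ||c|| + 2 [c in A3] + [c in A4] + [c in B4],
   the only cells of size below 5 being of type A3, A4 and B4.  Summing
   over the cells and substituting into Euler's formula gives the bound. *)

From mathcomp Require Import all_boot all_order all_algebra zify lra.
Set Implicit Arguments. Unset Strict Implicit. Unset Printing Implicit Defensive.

Lemma connect_invariant (T : finType) (r : rel T) (P : pred T) x y :
  (forall a b, P a -> r a b -> P b) -> P x -> connect r x y -> P y.
Proof.
move=> rP + /connectP [p + ->]; elim: p x => //= z p IHp x Px /andP [rxz].
exact/IHp/(rP _ _ Px rxz).
Qed.

Lemma card_predE (T : finType) (P : pred T) : #|P| = \sum_(x : T) P x.
Proof.
by rewrite -sum1_card big_mkcond; apply: eq_bigr => x _; rewrite unfold_in; case: (P x).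
Qed.

Lemma card_predI_sum (T : finType) (P Q : pred T) :
  #|[pred x | P x && Q x]| = \sum_(x | P x) Q x.
Proof. by rewrite card_predE [RHS]big_mkcond; apply: eq_bigr => x _ /=; case: (P x). Qed.

Lemma sum_orbits (T : finType) (f : T -> T) (w : T -> nat) : injective f ->
  \sum_(x | froot f x == x) \sum_(y | fconnect f x y) w y = \sum_y w y.
Proof.
move=> f_inj; have sym : connect_sym (frel f) by move=> x y; apply: fconnect_sym.
rewrite [RHS](partition_big (froot f) (fun x => froot f x == x)) /=; last first.
  by move=> x _; rewrite (root_root sym).
apply: eq_bigr => x /eqP rx; apply: eq_bigl => y.
by rewrite -{2}rx (root_connect sym) sym.
Qed.

Lemma exists_third (T : finType) (u v : T) : 3 <= #|T| -> exists w, (w != u) && (w != v).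
Proof.
move=> T3; apply/existsP; apply: contraTT T3 => /existsPn uv; rewrite -ltnNge ltnS.
apply: leq_trans (card_size [:: u; v]); apply: subset_leq_card; apply/subsetP => w _.
by move: (uv w); rewrite negb_and !negbK !inE.
Qed.

Section WellFormedDrawing.
Variable G : drawing.
Hypothesis Gok : drawing_ok G.

(** * Darts, edges and crossings *)

Lemma alphaK : involutive (@alpha G).
Proof. by case: Gok => alpha2 _ d; case: (alpha2 d). Qed.

Lemma sigma_inj : injective (@sigma G).
Proof. by case: Gok => _ [+ _]. Qed.

Lemma node_sigma (d : D G) : node (sigma d) = node d.
Proof. by case: Gok => _ [_ [+ _]]; apply. Qed.

Lemma node_phi (d : D G) : node (phi d) = node (alpha d).
Proof. exact: node_sigma. Qed.

Lemma phi_inj : injective (@phi G).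
Proof. by move=> d d' /sigma_inj /(can_inj alphaK). Qed.

Lemma sigma_connect_node (d d' : D G) : node d = node d' -> fconnect (@sigma G) d d'.
Proof. by case: Gok => _ [_ [_ [+ _]]]; apply. Qed.

Lemma card_crossing_darts (x : X G) : #|[pred d : D G | node d == inr x]| = 4.
Proof. by case: Gok => _ [_ [_ [_ [+ _]]]]; apply. Qed.

Lemma edge_okP (e : E G) : exists d0 s,
  [/\ epath e = d0 :: s, node d0 = inl (esrc e), node (alpha (last d0 s)) = inl (etgt e),
      esrc e != etgt e & path (@estep G) d0 s].
Proof.
case: Gok => _ [_ [_ [_ [_ [/(_ e) + _]]]]]; rewrite /edge_ok.
by case: (epath e) => // d0 s /and4P [/eqP h1 /eqP h2 h3 h4]; exists d0, s.
Qed.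

Lemma mem_edarts_eq (d : D G) (e e' : E G) : d \in edarts e -> d \in edarts e' -> e = e'.
Proof.
move=> de de'; apply/eqP/negPn/negP => ne.
case: Gok => _ [_ [_ [_ [_ [_ [/(_ d) + _]]]]]].
rewrite (bigD1 e) //= (bigD1 e') 1?eq_sym //=.
move: de de'; rewrite -!has_pred1 !has_count.
by case: count => // n _; case: count => // m _; rewrite addnS addSn.
Qed.

Lemma edartsP (d : D G) : exists e, d \in edarts e.
Proof.
case: Gok => _ [_ [_ [_ [_ [_ [/(_ d) + _]]]]]].
case: (pickP (fun e => d \in edarts e)) => [e de|nde]; first by exists e.
by rewrite big1 // => e _; apply/count_memPn; rewrite nde.
Qed.

Lemma mem_edarts_alpha (d : D G) (e : E G) : (alpha d \in edarts e) = (d \in edarts e).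
Proof.
suff ed x : x \in edarts e -> alpha x \in edarts e.
  by apply/idP/idP => /ed //; rewrite alphaK.
rewrite /edarts !mem_cat => /orP [xe|/mapP [y ye ->]]; last by rewrite alphaK ye.
by rewrite map_f ?orbT.
Qed.

Lemma edarts_epath (d : D G) (e : E G) : d \in edarts e -> d \in epath e \/ alpha d \in epath e.
Proof. by rewrite mem_cat => /orP [|/mapP [y ye ->]]; [left | rewrite alphaK; right]. Qed.

Lemma crossing_endpoints (d : D G) (e e' : E G) v :
  is_xnode (node d) -> d \in edarts e -> sigma d \in edarts e' ->
  v \in endpoints e -> v \in endpoints e' -> False.
Proof.
case: Gok => _ [_ [_ [_ [_ [_ [_ [xcond _]]]]]]] dx de sde ve ve'.
have [_ disj] := xcond d e e' dx de sde.
have : v \in [seq v <- endpoints e | v \in endpoints e'] by rewrite mem_filter ve ve'.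
by rewrite disj.
Qed.

Lemma crossing_edges_neq (d : D G) (e e' : E G) :
  is_xnode (node d) -> d \in edarts e -> sigma d \in edarts e' -> e != e'.
Proof.
move=> dx de sde; apply/eqP => ee'; apply: (crossing_endpoints dx de sde (v := esrc e)).
  exact: mem_head.
by rewrite ee' mem_head.
Qed.

(** * Edges as paths of edge-segments *)

Lemma estep_node (d d' : D G) :
  estep d d' -> is_xnode (node (alpha d)) /\ node d' = node (alpha d).
Proof. by case/andP => adx /eqP ->; rewrite !node_sigma. Qed.

Lemma estep_path_src (d0 y : D G) s : path (@estep G) d0 s -> y \in s -> is_xnode (node y).
Proof.
elim: s d0 => //= z s IHs d0 /andP [d0z zs]; rewrite inE => /orP [/eqP -> | ys].
  by have [adx ->] := estep_node d0z.
exact: IHs zs ys.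
Qed.

Lemma estep_path_tgt (d0 y : D G) s :
  path (@estep G) d0 s -> y \in d0 :: s -> y != last d0 s -> is_xnode (node (alpha y)).
Proof.
elim: s d0 => [|z s IHs] d0 /=; first by rewrite inE => _ /eqP ->; rewrite eqxx.
case/andP => d0z zs; rewrite inE => /orP [/eqP -> _ | ys]; last exact: IHs.
by case: (estep_node d0z).
Qed.

Lemma epath_vertex_src (y : D G) e : y \in epath e -> is_vnode (node y) ->
  node y = inl (esrc e) /\ exists s, epath e = y :: s.
Proof.
have [d0 [s [-> d0e _ _ d0s]]] := edge_okP e; rewrite inE => /orP [/eqP -> _ | ys yv].
  by split; last exists s.
by move: yv (estep_path_src d0s ys); case: (node y).
Qed.

Lemma epath_vertex_tgt (y : D G) e :
  y \in epath e -> is_vnode (node (alpha y)) -> node (alpha y) = inl (etgt e).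
Proof.
have [d0 [s [-> _ se _ d0s]]] := edge_okP e => ye ayv.
case: (altP (y =P last d0 s)) => [-> // | ylast].
by move: ayv (estep_path_tgt d0s ye ylast); case: (node (alpha y)).
Qed.

Lemma edarts_vertex_endpoint (d : D G) e v :
  d \in edarts e -> node d = inl v -> v \in endpoints e.
Proof.
case/edarts_epath => [de | ade] dv.
  by have [] := epath_vertex_src de; rewrite dv => // -[->]; rewrite mem_head.
have := epath_vertex_tgt ade; rewrite alphaK dv => /(_ isT) [->].
by rewrite !inE eqxx orbT.
Qed.

Lemma vertex_segment_neq (d : D G) e : d \in edarts e ->
  is_vnode (node d) -> is_vnode (node (alpha d)) -> node d != node (alpha d).
Proof.
suff fwd y : y \in epath e -> is_vnode (node y) -> is_vnode (node (alpha y)) ->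
    node y != node (alpha y).
  case/edarts_epath => [/fwd // | /fwd + dv adv]; rewrite alphaK eq_sym.
  exact.
move=> ye yv ayv; have [-> _] := epath_vertex_src ye yv; rewrite (epath_vertex_tgt ye ayv).
have [_ [_ [_ _ _ ne _]]] := edge_okP e.
by apply: contra ne => /eqP [->].
Qed.

Lemma vertex_segment_darts (d d' : D G) e : d \in edarts e -> d' \in edarts e ->
  is_vnode (node d) -> is_vnode (node (alpha d)) ->
  is_vnode (node d') -> is_vnode (node (alpha d')) -> d' = d \/ d' = alpha d.
Proof.
have head_of x : x \in edarts e -> is_vnode (node x) -> is_vnode (node (alpha x)) ->
    exists2 y, (y == x) || (y == alpha x) & exists s, epath e = y :: s.
  case/edarts_epath => xe xv axv; [exists x | exists (alpha x)]; rewrite ?eqxx ?orbT //.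
    by case: (epath_vertex_src xe xv).
  by case: (epath_vertex_src xe axv).
move=> de d'e dv adv d'v ad'v.
have [y yd [s ye]] := head_of d de dv adv.
have [y' y'd' [s' y'e]] := head_of d' d'e d'v ad'v.
move: y'e; rewrite ye => -[yy' _]; subst y'.
have yx x : (y == x) || (y == alpha x) -> x = y \/ x = alpha y.
  by case/orP => /eqP ->; rewrite ?alphaK; auto.
by case: (yx d yd) => ->; case: (yx d' y'd') => ->; rewrite ?alphaK; auto.
Qed.

Lemma segment_part e i (x0 : D G) : i < size (epath e) ->
  let f := nth x0 (epath e) i in
  [/\ onth (enodes e) i = Some (node f), onth (enodes e) i.+1 = Some (node (alpha f)),
      part_darts e i i.+1 = [:: f] & part_nodes e i i.+1 = [:: node f; node (alpha f)]].
Proof.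
have [d0 [s [es _ _ _ d0s]]] := edge_okP e.
have onth_tgt j : j < size (epath e) ->
    onth (enodes e) j.+1 = Some (node (alpha (nth x0 (epath e) j))).
  have -> : onth (enodes e) j.+1 = onth [seq node (alpha d) | d <- epath e] j.
    by rewrite /enodes es.
  by move=> hj; rewrite onthE -map_comp (nth_map x0).
move=> hi f; have onth_src : onth (enodes e) i = Some (node f).
  case: i hi @f => [|k] hk; first by rewrite /enodes es.
  rewrite onth_tgt 1?ltnW // es /=; move: hk; rewrite es ltnS => hk.
  by have [_ ->] := estep_node (pathP x0 d0s k hk).
have hi' : i.+1 < size (enodes e) by rewrite -onthTE onth_tgt.
split=> //; rewrite ?onth_tgt // /part_darts /part_nodes subSnn.
  by rewrite (drop_nth x0 hi) /= take0.
rewrite (drop_nth (node f) (ltnW hi')) (drop_nth (node f) hi') /= take0.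
by rewrite (onth_nth _ _ _ _ onth_src) (onth_nth _ _ _ _ (onth_tgt _ hi)).
Qed.

Lemma edarts_nth (d : D G) e : d \in edarts e ->
  exists2 i, i < size (epath e) & (nth d (epath e) i == d) || (nth d (epath e) i == alpha d).
Proof.
case/edarts_epath => de; [exists (index d (epath e)) | exists (index (alpha d) (epath e))];
  by rewrite ?index_mem ?nth_index ?eqxx ?orbT.
Qed.

(** * Counting darts and cells *)

Local Notation vdarts := [pred d : D G | is_vnode (node d)].

Lemma sum_csize : \sum_(f : D G | face_root f) csize f = #|D G| + #|vdarts|.
Proof.
have csizeE (f : D G) : csize f = \sum_(d | in_cell f d) (1 + is_vnode (node d)).
  by rewrite /csize big_split /= sum1_card card_predI_sum.
under eq_bigr do rewrite csizeE.
have -> : #|D G| + #|vdarts| = \sum_(d : D G) (1 + is_vnode (node d)).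
  by rewrite big_split /= sum1_card -card_predE.
by rewrite (sum_orbits (fun d => 1 + is_vnode (node d)) phi_inj).
Qed.

Lemma card_darts : #|D G| = #|vdarts| + 4 * #|X G|.
Proof.
rewrite -(cardC vdarts); congr (_ + _).
have -> : 4 * #|X G| = \sum_(x : X G) #|[pred d : D G | node d == inr x]|.
  by rewrite (eq_bigr (fun _ => 4)) ?sum_nat_const 1?mulnC // => x _; apply: card_crossing_darts.
under eq_bigr do rewrite card_predE.
rewrite exchange_big card_predE; apply: eq_bigr => d _; rewrite !inE.
case nd: (node d) => [v|x] /=; rewrite nd; first by rewrite big1.
by rewrite (bigD1 x) //= eqxx big1 // => y yx; case: eqP => // -[xy]; rewrite xy eqxx in yx.
Qed.

Lemma card_edges_le : 2 * #|E G| <= #|vdarts|.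
Proof.
case: (posnP #|E G|) => [-> // | /card_gt0P [e0 _]]; have [x0 _] := edge_okP e0.
pose edge (z : E G + E G) := match z with inl e | inr e => e end.
pose end_vertex (z : E G + E G) := match z with inl e => esrc e | inr e => etgt e end.
pose end_dart (z : E G + E G) :=
  match z with inl e => head x0 (epath e) | inr e => alpha (last x0 (epath e)) end.
have end_dartP z : node (end_dart z) = inl (end_vertex z) /\ end_dart z \in edarts (edge z).
  case: z => e /=; have [d0 [s [es d0e se _ _]]] := edge_okP e; rewrite /edarts es.
    by split=> //; rewrite mem_cat mem_head.
  by split=> //; rewrite mem_cat map_f ?orbT //= mem_last.
have end_dart_inj : injective end_dart.
  move=> z z' zz'; have [nz ze] := end_dartP z; have [nz' ze'] := end_dartP z'.
  rewrite zz' nz' in nz ze; have ee' := mem_edarts_eq ze ze'; case: nz => vv.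
  clear zz' ze ze' nz'; move: ee' vv; case: z => [e|e]; case: z' => [e'|e'] /= <- // vv;
    by have [_ [_ [_ _ _ ne _]]] := edge_okP e; rewrite vv eqxx in ne.
rewrite mul2n -addnn -card_sum -cardsT -(card_imset _ end_dart_inj).
apply/subset_leq_card/subsetP => _ /imsetP [z _ ->].
by rewrite inE /= (proj1 (end_dartP z)).
Qed.

Lemma card_cell (f : D G) (Q : pred (D G)) :
  #|[pred d | in_cell f d && Q d]| = count Q (orbit (@phi G) f).
Proof.
rewrite -size_filter -(card_uniqP (filter_uniq Q (orbit_uniq _ _))).
by apply: eq_card => d; rewrite !inE mem_filter /in_cell fconnect_orbit andbC.
Qed.

Lemma cell_charge (f : D G) : 2 < order (@phi G) f ->
  30 + (if 6 <= csize f then csize f else 0) <=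
  6 * csize f + 12 * typeA3 f + 6 * typeA4 f + 6 * typeB4 f.
Proof.
have csizeE : csize f = order (@phi G) f + count (fun d => is_vnode (node d)) (orbit (@phi G) f).
  rewrite /csize card_cell -size_orbit -count_predT -(card_cell f predT); congr (_ + _).
  by apply: eq_card => d; rewrite !inE andbT.
move=> f3; case: (ltnP 4 (order (@phi G) f)) => [f5 | f4].
  by case: leqP; rewrite csizeE; lia.
have ninnerE : #|[pred d | in_cell f d && is_xnode (node d) && is_xnode (node (alpha d))]| =
    count (fun d => is_xnode (node d) && is_xnode (node (alpha d))) (orbit (@phi G) f).
  by rewrite -card_cell; apply: eq_card => d; rewrite !inE andbA.
have xnodeN (n : V G + X G) : is_xnode n = ~~ is_vnode n by case: n.
rewrite /typeA3 /typeA4 /typeB4 /nvx /nxx /nouter /ninner ninnerE !card_cell csizeE /orbit.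
move: f3 f4 (iter_order phi_inj f); case: (order _ f) => [|[|[|[|[|k]]]]] //= _ _ f_id.
all: rewrite -!node_phi f_id !xnodeN.
- by case: (is_vnode (node f)); case: (is_vnode (node (phi f)));
    case: (is_vnode (node (phi (phi f)))).
- by case: (is_vnode (node f)); case: (is_vnode (node (phi f)));
    case: (is_vnode (node (phi (phi f)))); case: (is_vnode (node (phi (phi (phi f))))).
Qed.

(** * Cells with at most two sides *)

Lemma phi2_vertex_crossing (d : D G) :
  phi (phi d) = d -> is_vnode (node d) -> is_xnode (node (alpha d)) -> False.
Proof.
move=> pd; case dv: (node d) => [v|] // _ adx.
have [e de] := edartsP d; have [e' pde'] := edartsP (phi d).
apply: (crossing_endpoints (e := e) (v := v) adx _ pde'); first by rewrite mem_edarts_alpha.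
  exact: edarts_vertex_endpoint de dv.
by apply: (@edarts_vertex_endpoint (alpha (phi d))); rewrite ?mem_edarts_alpha // -node_phi pd.
Qed.

Lemma fixed_segment_component (d : D G) n : sigma d = d -> sigma (alpha d) = alpha d ->
  connect (@nadj G) (node d) n -> (n == node d) || (n == node (alpha d)).
Proof.
have fixed (z x : D G) : sigma z = z -> node x = node z -> x = z.
  by move=> sz /esym/sigma_connect_node/iter_findex <-; rewrite iter_fix.
move=> sd sad; apply: (connect_invariant (P := fun m => (m == node d) || (m == node (alpha d)))).
  move=> a b /orP [] /eqP -> /existsP [x /andP [/eqP xa /eqP <-]].
    by rewrite (fixed d x) ?eqxx ?orbT.
  by rewrite (fixed (alpha d) x) ?alphaK ?eqxx.
by rewrite eqxx.
Qed.

Hypothesis NH : nonhomotopic G.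

Lemma no_empty_lens (d : D G) e e' :
  e != e' -> d \in edarts e -> phi d \in edarts e' -> phi (phi d) = d -> False.
Proof.
move=> ne de d'e' d'd; set d' := phi d in d'e' d'd.
have [i hi fd] := edarts_nth de; have [j hj fd'] := edarts_nth d'e'.
have [oi oi1 pdi pni] := segment_part d hi; have [oj oj1 pdj pnj] := segment_part d' hj.
move: (NH ne (ltnSn i) (ltnSn j) hi hj); rewrite pdi pni pdj pnj oi oi1 oj oj1 /=.
set f := nth d (epath e) i in fd *; set f' := nth d' (epath e') j in fd' *.
have nd' : node d' = node (alpha d) by exact: node_phi.
have nad' : node (alpha d') = node d by rewrite -node_phi d'd.
have in2 (a b n : V G + X G) : n \in [:: a; b] -> (Some n == Some a) || (Some n == Some b).
  by rewrite !inE.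
(* From d, face steps alternate between d and d' and dart flips are blocked by
   the boundary C, so that side of the lens has no node in its interior. *)
have trapped (C : seq (D G)) (Cn : seq (V G + X G)) :
    d \in C -> d' \in C -> node d \in Cn -> node d' \in Cn ->
    ~~ [exists y, connect (fun a b => (b == phi a) || ((b == alpha a) && (a \notin C))) d y
                  && (node y \notin Cn)].
  move=> dC d'C dCn d'Cn; apply/existsP => -[y /andP [dy yCn]].
  suff : y \in [:: d; d'] by rewrite !inE => /orP [] /eqP yd; rewrite yd ?dCn ?d'Cn in yCn.
  apply: (connect_invariant _ _ dy) => [a b|] /=; last by rewrite eqxx.
  by rewrite !orbF => /orP [] /eqP -> /orP [/eqP -> | /andP [_]]; rewrite ?d'd ?eqxx ?orbT ?dC ?d'C.
case/orP: fd => /eqP ->; case/orP: fd' => /eqP ->; rewrite ?alphaK nd' nad' !eqxx ?orbT /=.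
all: move=> /(_ isT (fun n hn _ => in2 _ _ _ hn) _ (mem_head _ _)) /andP [s s'].
all: rewrite ?alphaK in s'.
all: first [ by move: s; apply/negP/trapped; rewrite !inE ?nd' ?eqxx ?orbT
           | by move: s'; apply/negP/trapped; rewrite !inE ?nd' ?eqxx ?orbT ].
Qed.

Lemma phi2_crossings (d : D G) :
  phi (phi d) = d -> is_xnode (node d) -> is_xnode (node (alpha d)) -> False.
Proof.
move=> pd dx adx; have [e de] := edartsP d; have [e' pde'] := edartsP (phi d).
have ade : alpha d \in edarts e by rewrite mem_edarts_alpha.
exact: no_empty_lens (crossing_edges_neq adx ade pde') de pde' pd.
Qed.

Hypothesis conn : connected_drawing G.
Hypothesis V3 : 3 <= #|V G|.

Lemma phi2_vertices (d : D G) :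
  phi (phi d) = d -> is_vnode (node d) -> is_vnode (node (alpha d)) -> False.
Proof.
move=> pd dv adv; have [e de] := edartsP d; have [e' pde'] := edartsP (phi d).
have [ee'|ne] := eqVneq e e'; last exact: no_empty_lens ne de pde' pd.
subst e'; have pdv : is_vnode (node (phi d)) by rewrite node_phi.
have apdv : is_vnode (node (alpha (phi d))) by rewrite -node_phi pd.
case: (vertex_segment_darts de pde' dv adv pdv apdv) => [pdd | pda].
  by move: (vertex_segment_neq de dv adv); rewrite -node_phi pdd eqxx.
(* Both ends of the uncrossed edge have degree one: a component with two vertices. *)
have sd : sigma d = d by move: pd; rewrite pda /phi alphaK.
have comp n := fixed_segment_component sd pda (conn (node d) n).
move: dv adv comp.
case: (node d) => [v|] // _; case: (node (alpha d)) => [u|] // _ => uv_comp.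
have [w /andP [wv wu]] := exists_third v u V3.
by case/orP: (uv_comp (inl w)) => /eqP [wE]; rewrite wE eqxx in wv wu.
Qed.

Lemma phi2_neq (d : D G) : phi (phi d) != d.
Proof.
apply/eqP => pd; case dv: (node d) => [v|x]; case adv: (node (alpha d)) => [u|y].
- by apply: (phi2_vertices pd); rewrite ?dv ?adv.
- by apply: (phi2_vertex_crossing pd); rewrite ?dv ?adv.
- apply: (@phi2_vertex_crossing (phi d)); first by rewrite pd.
    by rewrite node_phi adv.
  by rewrite -node_phi pd dv.
- by apply: (phi2_crossings pd); rewrite ?dv ?adv.
Qed.

Lemma order_phi_gt2 (f : D G) : 2 < order (@phi G) f.
Proof.
have := iter_order phi_inj f; have := order_gt0 (@phi G) f.
case: (order _ f) => [|[|[|k]]] // _ /= it; move: (phi2_neq f); rewrite ?it ?eqxx //.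
Qed.

(** * Euler's formula *)

Lemma no_isolated_nodes : #|[pred n : V G + X G | isolated n]| = 0.
Proof.
have /card_gt0P [v0 _] : 0 < #|V G| by apply: leq_trans V3.
apply: eq_card0 => n; rewrite inE; apply/negbTE.
have [w wn] : exists w : V G, inl w != n.
  case: n => [v|x]; last by exists v0.
  have [w /andP [wv _]] := exists_third v v V3.
  by exists w; apply: contra wv => /eqP [->].
case/connectP: (conn n (inl w)) => -[/= _ wE | m p /= /andP [/existsP [d /andP [/eqP dn _]] _] _].
  by rewrite wE eqxx in wn.
by rewrite /isolated negb_forall; apply/existsP; exists d; rewrite dn negbK.
Qed.

Lemma n_comp_nadj_gt0 : 0 < n_comp (@nadj G) predT.
Proof.
have /card_gt0P [v0 _] : 0 < #|V G| by apply: leq_trans V3.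
have sym : connect_sym (@nadj G) by move=> x y; rewrite !conn.
by apply/card_gt0P; exists (fingraph.root (@nadj G) (inl v0)); rewrite !inE (roots_root sym).
Qed.

Lemma discharging : 6 * #|X G| + big_cells_sum G + 6 * #|E G| <=
  30 * #|V G| + 12 * NA3 G + 6 * NA4 G + 6 * NB4 G.
Proof.
have euler : #|V G| + #|X G| + nfaces G + #|[pred n : V G + X G | isolated n]| =
    #|D G| %/ 2 + 2 * n_comp (@nadj G) predT.
  by case: Gok => _ [_ [_ [_ [_ [_ [_ [_ +]]]]]]].
have charge : 30 * nfaces G + big_cells_sum G <=
    6 * \sum_(f : D G | face_root f) csize f + 12 * NA3 G + 6 * NA4 G + 6 * NB4 G.
  have -> : nfaces G = \sum_(f : D G | face_root f) 1 by rewrite sum1_card.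
  rewrite /big_cells_sum /NA3 /NA4 /NB4 !card_predI_sum big_mkcondr.
  rewrite !big_distrr -!big_split /=; apply: leq_sum => f _.
  by rewrite muln1; apply/cell_charge/order_phi_gt2.
move: euler charge; rewrite sum_csize no_isolated_nodes card_darts.
by have := card_edges_le; have := n_comp_nadj_gt0; lia.
Qed.

End WellFormedDrawing.

Import Order.TTheory GRing.Theory Num.Theory.
Local Open Scope ring_scope.

Theorem mainTheorem8 (G : drawing) :
  three_saturated G ->
  (#|X G|%:R : rat) <=
    5 * (#|V G|%:R) + 2 * (NA3 G)%:R + (NA4 G)%:R + (NB4 G)%:R
    - (1 / 6) * (big_cells_sum G)%:R - #|E G|%:R.
Proof.
case=> Gok [_ [NH [conn [_ V3]]]].
have := discharging Gok NH conn V3.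
rewrite -(ler_nat rat) !natrD => bound.
lra.
Qed.
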